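(* Let $d\ge 2$ and $x\ge 1$ be integers, and let $U_1,\dots,U_x\in U(d^2)$ be unitary gates. Let $R_x$ and $L_x$ be the linear maps on $W^{\otimes x}$ built from $U_1,\dots,U_x$ as defined in the context, and for $y=0,\dots,x$ set $$r_y=\mathrm{tri}^{\otimes y}\otimes \mathrm{circ}^{\otimes (x-y)},\qquad \ell_y=\mathrm{circ}^{\otimes y}\otimes \mathrm{cross}^{\otimes (x-y)}\in W^{\otimes x},$$ where the $m$-th tensor factor corresponds to the $m$-th gate. (i) If all $U_1,\dots,U_x$ are dual-unitary, then $R_x$ has at least $x+1$ (linearly independent) right eigenvectors and at least $x+1$ left eigenvectors with eigenvalue $d^2$, explicitly given by $\{r_y\}_{y=0}^{x}$, i.e. $R_x r_y=d^2 r_y$ and $r_y^{T}R_x=d^2 r_y^{T}$ for all $y=0,\dots,x$; likewise $L_x\ell_y=d^2\ell_y$ and $\ell_y^{T}L_x=d^2\ell_y^{T}$ for all $y=0,\dots,x$. (ii) If the gates $U_1,\dots,U_x$ are merely unitary (not necessarily dual-unitary), then $r_0$ and $\ell_0$ are still right eigenvectors with eigenvalue $d^2$ (i.e. $R_xr_0=d^2r_0$, $L_x\ell_0=d^2\ell_0$), and $r_x$, $\ell_x$ are still left eigenvectors with eigenvalue $d^2$ (i.e. $r_x^TR_x=d^2r_x^T$, $\ell_x^TL_x=d^2\ell_x^T$).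
   Context: Let $V=\mathbb C^d$ with orthonormal basis $\{|i\rangle\}_{i=1}^d$, and $W=V^{\otimes 8}$ with basis $|i_1,\dots,i_8\rangle$. Define the (real) vectors in $W$: $\mathrm{circ}=\sum_{i_1,\dots,i_4=1}^d|i_1,i_1,i_2,i_2,i_3,i_3,i_4,i_4\rangle$, $\mathrm{tri}=\sum_{i_1,\dots,i_4=1}^d|i_1,i_2,i_2,i_1,i_3,i_4,i_4,i_3\rangle$, $\mathrm{cross}=\sum_{i_1,\dots,i_4=1}^d|i_1,i_2,i_3,i_4,i_4,i_3,i_2,i_1\rangle$; for $v\in W$ write $v_k=\langle k|v\rangle$ for basis labels $k$, and $v^T$ for the transpose (row) vector. For $U\in U(d^2)$ acting on $V\otimes V$, define the replicated (''folded'') gate $G_U$ on $W\otimes W$ by identifying $W\otimes W\cong\bigotimes_{a=1}^{8}(V^{(a)}_{\rm left}\otimes V^{(a)}_{\rm right})$ (the $a$-th copy of $V$ in the first, resp. second, factor $W$) and setting $G_U=\bigotimes_{a=1}^8 U^{(a)}$, where $U^{(a)}=U$ for odd $a$ and $U^{(a)}=\bar U$ (entrywise complex conjugate in the given basis) for even $a$, each acting on $V^{(a)}_{\rm left}\otimes V^{(a)}_{\rm right}$. For basis labels $a,b,c,e$ of $W$ write $\langle c,e|G_U|a,b\rangle$ (first slot = left leg, second slot = right leg; $a$ = input-left, $b$ = input-right, $c$ = output-left, $e$ = output-right). Transfer matrices: for gates $U_1,\dots,U_x$ with $G_m=G_{U_m}$, define $R_x,L_x$ on $W^{\otimes x}$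 by $$\langle e_1\dots e_x|R_x|a_1\dots a_x\rangle=\sum_{k_0,\dots,k_x}\mathrm{tri}_{k_0}\Big(\prod_{m=1}^x\langle k_{m-1},e_m|G_m|a_m,k_m\rangle\Big)\mathrm{circ}_{k_x},$$ $$\langle b_1\dots b_x|L_x|c_1\dots c_x\rangle=\sum_{k_0,\dots,k_x}\mathrm{circ}_{k_0}\Big(\prod_{m=1}^x\langle c_m,k_m|G_m|k_{m-1},b_m\rangle\Big)\mathrm{cross}_{k_x},$$ all sums over basis labels of $W$. Dual-unitarity: for $U\in U(d^2)$ define $\tilde U$ by $\langle ij|\tilde U|k\ell\rangle=\langle j\ell|U|ik\rangle$; $U$ is dual-unitary if both $U$ and $\tilde U$ are unitary. *)

(* Scalars: an arbitrary numClosedFieldType C (e.g. the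
   complex numbers), with complex conjugation Num.conj. *)
From HB Require Import structures.
From mathcomp Require Import all_boot all_order all_algebra.
Set Implicit Arguments. Unset Strict Implicit. Unset Printing Implicit Defensive.
Import Order.TTheory GRing.Theory Num.Theory.
Local Open Scope ring_scope.

(* basis labels of W = V^{(x)8}: k = (k_1,...,k_8), stored 0-based as k 0..k 7 *)
Notation lab d := {ffun 'I_8 -> 'I_d}.
(* basis labels of W^{(x)x}: one W-label per gate *)
Notation wlab d x := {ffun 'I_x -> lab d}.

Section Defs.
Variables (C : numClosedFieldType) (d : nat).

(* index of the basis vector |i j> of V (x) V inside 'I_(d*d) *)
Definition pidx (i j : 'I_d) : 'I_(d * d) := mxvec_index i j.

Definition ent (U : 'M[C]_(d * d)) (i j k l : 'I_d) : C := U (pidx i j) (pidx k l).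

Definition adjoint (U : 'M[C]_(d * d)) : 'M[C]_(d * d) := (map_mx Num.conj U)^T.

Definition unitary_mx (U : 'M[C]_(d * d)) : Prop :=
  U *m adjoint U = 1%:M /\ adjoint U *m U = 1%:M.

(* U is dual-unitary iff U is unitary and the matrix Ut with
   <ij|Ut|kl> = <jl|U|ik> (uniquely determined, pidx being a bijection
   'I_d * 'I_d -> 'I_(d*d)) is unitary *)
Definition dual_unitary (U : 'M[C]_(d * d)) : Prop :=
  unitary_mx U /\
  exists Ut : 'M[C]_(d * d),
    (forall i j k l : 'I_d, ent Ut i j k l = ent U j l i k) /\ unitary_mx Ut.

(* coefficients of circ, tri, cross (each is a sum of distinct basis vectors
   with coefficient 1, so its k-th coefficient is an indicator).
   0-based positions. *)
Definition circ (k : lab d) : C :=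
  [&& k 0 == k 1, k 2 == k 3, k 4 == k 5 & k 6 == k 7]%:R.
Definition tri (k : lab d) : C :=
  [&& k 0 == k 3, k 1 == k 2, k 4 == k 7 & k 5 == k 6]%:R.
Definition cross (k : lab d) : C :=
  [&& k 0 == k 7, k 1 == k 6, k 2 == k 5 & k 3 == k 4]%:R.

(* <c,e|G_U|a,b> ; copy a = s+1 (1-based) is odd iff s is even *)
Definition gate (U : 'M[C]_(d * d)) (a b c e : lab d) : C :=
  \prod_(s < 8) (if ~~ odd s then ent U (c s) (e s) (a s) (b s)
                 else Num.conj (ent U (c s) (e s) (a s) (b s))).

Variable x : nat.
Variable U : 'I_x -> 'M[C]_(d * d).

(* k : {ffun 'I_x.+1 -> lab d} stores k_0 .. k_x ; for gate m (0-based,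
   i.e. gate m+1), k_{m} (0-based prev) = k (widen m), next = k (lift ord0 m) *)
Definition kprev (k : {ffun 'I_x.+1 -> lab d}) (m : 'I_x) := k (widen_ord (leqnSn x) m).
Definition knext (k : {ffun 'I_x.+1 -> lab d}) (m : 'I_x) := k (lift ord0 m).

Definition Rmat (e a : wlab d x) : C :=
  \sum_(k : {ffun 'I_x.+1 -> lab d})
    tri (k ord0) * (\prod_(m < x) gate (U m) (a m) (knext k m) (kprev k m) (e m))
    * circ (k ord_max).

Definition Lmat (b c : wlab d x) : C :=
  \sum_(k : {ffun 'I_x.+1 -> lab d})
    circ (k ord0) * (\prod_(m < x) gate (U m) (kprev k m) (b m) (c m) (knext k m))
    * cross (k ord_max).

Definition mact (M : wlab d x -> wlab d x -> C) (v : wlab d x -> C) : wlab d x -> C :=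
  fun i => \sum_j M i j * v j.
Definition ract (v : wlab d x -> C) (M : wlab d x -> wlab d x -> C) : wlab d x -> C :=
  fun j => \sum_i v i * M i j.

Definition rvec (y : nat) (a : wlab d x) : C :=
  \prod_(m < x) (if (m < y)%N then tri (a m) else circ (a m)).
Definition lvec (y : nat) (a : wlab d x) : C :=
  \prod_(m < x) (if (m < y)%N then circ (a m) else cross (a m)).

End Defs.

From HB Require Import structures.
From mathcomp Require Import all_boot all_order all_algebra.
From Stdlib Require Import FunctionalExtensionality.
Set Implicit Arguments. Unset Strict Implicit. Unset Printing Implicit Defensive.
Import Order.TTheory GRing.Theory Num.Theory.
Local Open Scope ring_scope.

(* Contracting the external legs of R_x with r_y (or of L_x with l_y) leaves a chain of
   one-gate transfer kernels between two boundary states, i.e. a path sum.  Each of circ,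
   tri and cross pairs the eight replicas so that every pair joins a copy of U with a
   copy of conj U.  Hence contracting two legs of a gate with such a paired state
   reproduces the same state on the other two legs as soon as the summed legs of U carry
   orthonormal vectors: the two inputs or the two outputs by unitarity, the two left or
   the two right legs by dual unitarity.  Pushing the left boundary state through the
   first y gates and the right one through the others collapses the chain to r_y (or
   l_y) times the overlap of the two boundary states, which is d^2.  Unitarity alone
   allows exactly the pushes needed for y = 0 (right eigenvectors) and y = x (left
   eigenvectors).  Linear independence follows by evaluating at labels on which the two
   states take the values 1, 0 and 0, 1. *)

Section PathSum.
Variables (R : comPzSemiRingType) (A : finType).

Definition path_sum n (alpha : A -> R) (T : 'I_n -> A -> A -> R) (beta : A -> R) : R :=
  \sum_(k : {ffun 'I_n.+1 -> A})
    alpha (k ord0) * (\prod_(m < n) T m (k (widen_ord (leqnSn n) m)) (k (lift ord0 m)))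
    * beta (k ord_max).

Lemma path_sum0 alpha (T : 'I_0 -> A -> A -> R) beta :
  path_sum alpha T beta = \sum_a alpha a * beta a.
Proof.
rewrite /path_sum (reindex (fun a => [ffun=> a])) /=; last first.
  exists (fun k => k ord0) => [a _|k _]; first by rewrite ffunE.
  by apply/ffunP => i; rewrite ffunE [i]ord1.
by apply: eq_bigr => a _; rewrite big_ord0 !ffunE mulr1.
Qed.

Lemma path_sumS n alpha (T : 'I_n.+1 -> A -> A -> R) beta :
  path_sum alpha T beta =
  path_sum alpha (fun m => T (widen_ord (leqnSn n) m)) (fun p => \sum_q T ord_max p q * beta q).
Proof.
pose init (k : {ffun 'I_n.+2 -> A}) := [ffun i => k (widen_ord (leqnSn n.+1) i)].
pose snoc (k : {ffun 'I_n.+1 -> A}) a : {ffun 'I_n.+2 -> A} :=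
  [ffun i => if unlift ord_max i is Some j then k j else a].
have widen_max (i : 'I_n.+1) : widen_ord (leqnSn n.+1) i = lift ord_max i.
  exact/val_inj/esym/lift_max.
rewrite /path_sum; under [RHS]eq_bigr do rewrite big_distrr /=.
rewrite pair_bigA /= (reindex (fun k => (init k, k ord_max))) /=; last first.
  exists (fun p => snoc p.1 p.2) => [k _|[k a] _] /=.
    apply/ffunP => i; rewrite ffunE; case: unliftP => [j ->|->] //.
    by rewrite ffunE widen_max.
  congr (_, _); last by rewrite ffunE unlift_none.
  by apply/ffunP => i; rewrite !ffunE widen_max liftK.
apply: eq_bigr => k _; rewrite big_ord_recr /= !ffunE !mulrA.
have k_val (i j : 'I_n.+2) : i = j :> nat -> k i = k j by move/val_inj->.
congr (alpha _ * _ * T _ _ _ * _); try exact: k_val.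
by apply: eq_bigr => m _; rewrite !ffunE; congr (T _ _ _); exact: k_val.
Qed.

Lemma path_sumZr n alpha (T : 'I_n -> A -> A -> R) beta beta' c :
  (forall p, beta' p = c * beta p) -> path_sum alpha T beta' = c * path_sum alpha T beta.
Proof.
move=> hbeta; rewrite /path_sum big_distrr /=.
by apply: eq_bigr => k _; rewrite hbeta mulrCA.
Qed.

Lemma path_sum_eigen n alpha beta (T : 'I_n -> A -> A -> R) (f g : 'I_n -> R) (y : nat) :
  (forall m : 'I_n, (m < y)%N -> forall q, \sum_p alpha p * T m p q = f m * alpha q) ->
  (forall m : 'I_n, (y <= m)%N -> forall p, \sum_q T m p q * beta q = g m * beta p) ->
  path_sum alpha T beta =
  (\prod_(m < n) (if (m < y)%N then f m else g m)) * \sum_a alpha a * beta a.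
Proof.
elim: n beta T f g => [|n IH] beta T f g hl hr; first by rewrite path_sum0 big_ord0 mul1r.
pose w := widen_ord (leqnSn n).
have hl' (m : 'I_n) : (m < y)%N -> forall q, \sum_p alpha p * T (w m) p q = f (w m) * alpha q.
  exact: hl (w m).
rewrite path_sumS big_ord_recr /=.
have [yn|ny] := leqP y n.
- rewrite (path_sumZr _ _ (hr ord_max yn)) (IH beta _ (f \o w) (g \o w) hl') => [|m].
    by rewrite mulrCA mulrA.
  exact: hr (w m).
- rewrite (IH _ _ (f \o w) (g \o w) hl') => [|m ym]; last first.
    by have := leq_trans (leq_ltn_trans ym (ltn_ord m)) (ltnW ny); rewrite ltnn.
  rewrite -mulrA; congr (_ * _).
  transitivity (\sum_a \sum_q alpha a * (T ord_max a q * beta q)).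
    by apply: eq_bigr => a _; rewrite mulr_sumr.
  rewrite exchange_big mulr_sumr /=; apply: eq_bigr => q _.
  by rewrite mulrA -hl // mulr_suml; apply: eq_bigr => p _; rewrite mulrA.
Qed.

Lemma path_sum_weighted n (B : finType) alpha beta (V : 'I_n -> B -> R)
    (G : 'I_n -> B -> A -> A -> R) :
  \sum_(a : {ffun 'I_n -> B})
    path_sum alpha (fun m => G m (a m)) beta * \prod_(m < n) V m (a m)
  = path_sum alpha (fun m p q => \sum_b V m b * G m b p q) beta.
Proof.
rewrite /path_sum; under eq_bigr do rewrite mulr_suml.
rewrite exchange_big /=; apply: eq_bigr => k _.
rewrite bigA_distr_bigA /= mulr_sumr mulr_suml; apply: eq_bigr => a _.
by rewrite big_split /= mulrAC -!mulrA [_ * (_ * beta _)]mulrCA.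
Qed.

Definition prefix_prod n (alpha beta : A -> R) (y : nat) (a : {ffun 'I_n -> A}) : R :=
  \prod_(m < n) (if (m < y)%N then alpha (a m) else beta (a m)).

Lemma path_sum_prefix_eigen n alpha beta (G : 'I_n -> A -> A -> A -> R)
    (w : {ffun 'I_n -> A}) y :
  (forall m : 'I_n, (m < y)%N -> forall q,
     \sum_p \sum_h alpha p * alpha h * G m h p q = alpha (w m) * alpha q) ->
  (forall m : 'I_n, (y <= m)%N -> forall p,
     \sum_q \sum_h beta q * beta h * G m h p q = beta (w m) * beta p) ->
  \sum_(a : {ffun 'I_n -> A})
    path_sum alpha (fun m => G m (a m)) beta * prefix_prod alpha beta y a
  = prefix_prod alpha beta y w * \sum_l alpha l * beta l.
Proof.
move=> hl hr; pose V m h := if (m < y)%N then alpha h else beta h.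
etransitivity; first exact: (path_sum_weighted _ _ V G).
apply: path_sum_eigen => [m ym q|m ym p].
- rewrite -hl //; apply: eq_bigr => p _; rewrite /V ym mulr_sumr.
  by apply: eq_bigr => h _; rewrite mulrA.
- rewrite -hr //; apply: eq_bigr => q _; rewrite /V ltnNge ym mulr_suml.
  by apply: eq_bigr => h _; rewrite mulrC mulrA.
Qed.

Lemma prefix_prods_free n alpha beta (t c : A) :
  alpha t = 1 -> beta t = 0 -> alpha c = 0 -> beta c = 1 ->
  forall coef : 'I_n.+1 -> R,
  (forall a : {ffun 'I_n -> A}, \sum_(y < n.+1) coef y * prefix_prod alpha beta y a = 0) ->
  forall y, coef y = 0.
Proof.
move=> at1 bt0 ac0 bc1 coef hcoef z.
pose a := [ffun m : 'I_n => if (m < z)%N then t else c].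
have prefix_a (y : 'I_n.+1) : prefix_prod alpha beta y a = (y == z :> nat)%:R.
  case: (ltngtP y z) => [yz|zy|/val_inj->].
  - have yn : (y < n)%N by rewrite (leq_trans yz) // -ltnS.
    by rewrite /prefix_prod (bigD1 (Ordinal yn)) //= ffunE /= ltnn yz bt0 mul0r.
  - have zn : (z < n)%N by rewrite (leq_trans zy) // -ltnS.
    by rewrite /prefix_prod (bigD1 (Ordinal zn)) //= ffunE /= ltnn zy ac0 mul0r.
  - by rewrite /prefix_prod big1 // => m _; rewrite ffunE; case: (m < z)%N.
rewrite -(hcoef a) (bigD1 z) //= big1 => [|y /negbTE yz].
  by rewrite prefix_a eqxx mulr1 addr0.
by rewrite prefix_a val_eqE yz mulr0.
Qed.
End PathSum.

Section Pairing.
Variables (S J L : finType).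

Record pairing (e o : J -> S) (pi : S -> J) : Prop := Pairing {
  pairing_fst : forall j, pi (e j) == j;
  pairing_snd : forall j, pi (o j) == j;
  pairing_cover : forall s, (e (pi s) == s) || (o (pi s) == s) }.

Definition paired (R : pzSemiRingType) (e o : J -> S) (u : {ffun S -> L}) : R :=
  \prod_j (u (e j) == u (o j))%:R.

Variables (R : comPzSemiRingType) (e o : J -> S) (pi : S -> J).
Hypothesis epi : pairing e o pi.
Let pi_e j : pi (e j) = j := eqP (pairing_fst epi j).
Let pi_o j : pi (o j) = j := eqP (pairing_snd epi j).

Lemma paired_indicator u : paired R e o u = [forall j, u (e j) == u (o j)]%:R.
Proof.
have [/forallP eq_u|/forallPn[j /negbTE neq_u]] := boolP [forall j, u (e j) == u (o j)].
  by apply: big1 => j _; rewrite eq_u.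
by rewrite /paired (bigD1 j) //= neq_u mul0r.
Qed.

Lemma paired_sum (G : {ffun S -> L} -> R) :
  \sum_u paired R e o u * G u = \sum_(t : {ffun J -> L}) G [ffun s => t (pi s)].
Proof.
under eq_bigr do rewrite paired_indicator mulr_natl mulrb.
rewrite -big_mkcond (reindex_onto (fun t : {ffun J -> L} => [ffun s => t (pi s)])
  (fun u => [ffun j => u (e j)])).
  apply: eq_bigl => t; apply/andP; split.
    by apply/forallP => j; rewrite !ffunE pi_e pi_o.
  by apply/eqP/ffunP => j; rewrite !ffunE pi_e.
move=> u /forallP eq_u; apply/ffunP => s; rewrite !ffunE.
by case/orP: (pairing_cover epi s) => /eqP {2}<- //; apply/eqP/eq_u.
Qed.

Lemma sum_paired : \sum_u paired R e o u = (#|L| ^ #|J|)%:R.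
Proof.
rewrite -(eq_bigr _ (fun u _ => mulr1 (paired R e o u))) paired_sum.
by rewrite sumr_const card_ffun.
Qed.

Lemma prod_pairing (F : S -> R) :
  (forall j, e j != o j) -> \prod_s F s = \prod_j (F (e j) * F (o j)).
Proof.
move=> neq_eo.
rewrite (reindex (fun p : bool * J => if p.1 then o p.2 else e p.2)) /=; last first.
  exists (fun s => (e (pi s) != s, pi s)) => [[[] j] _|s _] /=.
  - by rewrite pi_o neq_eo.
  - by rewrite pi_e eqxx.
  - case: eqP => [-> //|ne_es] /=.
    by case/orP: (pairing_cover epi s) => /eqP // es; case: ne_es.
rewrite -(pair_bigA _ (fun b j => F (if b then o j else e j))).
by rewrite big_bool /= mulrC -big_split.
Qed.
End Pairing.

Section Contraction.
Variables (S J L : finType) (R : numClosedFieldType).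

Definition orthonormal_family (H : L -> L -> L -> L -> R) :=
  forall y1 z1 y2 z2,
    \sum_a \sum_b H a b y1 z1 * (H a b y2 z2)^* = ((y1 == y2) && (z1 == z2))%:R.

Lemma orthonormal_family_transpose H :
  orthonormal_family H -> orthonormal_family (fun a b y z => H b a z y).
Proof. by move=> hH y1 z1 y2 z2; rewrite exchange_big hH andbC. Qed.

Variables (e o : J -> S) (pi : S -> J) (plain : pred S).
Hypotheses (epi : pairing e o pi) (plain_eo : forall j, plain (e j) != plain (o j)).

Lemma paired_contract (P : {ffun S -> L} -> R) H (y z : {ffun S -> L}) :
  P =1 paired R e o -> orthonormal_family H ->
  \sum_u \sum_v P u * P v *
    \prod_s (if plain s then H (u s) (v s) (y s) (z s) else (H (u s) (v s) (y s) (z s))^*)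
  = P y * P z.
Proof.
move=> hP hH.
pose Phi s a b := if plain s then H a b (y s) (z s) else (H a b (y s) (z s))^*.
have pair_sum j : \sum_a \sum_b Phi (e j) a b * Phi (o j) a b
    = ((y (e j) == y (o j)) && (z (e j) == z (o j)))%:R.
  rewrite /Phi; have := plain_eo j.
  case: (plain (e j)) (plain (o j)) => [] [] // _.
  rewrite -[RHS]conjC_nat -hH rmorph_sum; apply: eq_bigr => a _.
  by rewrite rmorph_sum; apply: eq_bigr => b _; rewrite rmorphM /= conjCK.
transitivity (\sum_u paired R e o u * \sum_v paired R e o v * \prod_s Phi s (u s) (v s)).
  apply: eq_bigr => u _; rewrite mulr_sumr; apply: eq_bigr => v _.
  by rewrite !hP mulrA.
under eq_bigr do rewrite (paired_sum epi).
rewrite (paired_sum epi).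
transitivity (\prod_j \sum_a \sum_b Phi (e j) a b * Phi (o j) a b).
  rewrite bigA_distr_bigA /=; apply: eq_bigr => t _.
  rewrite bigA_distr_bigA /=; apply: eq_bigr => t' _.
  rewrite (prod_pairing epi) => [|j]; last first.
    by apply: contraNneq (plain_eo j) => ->.
  apply: eq_bigr => j _.
  by rewrite !ffunE (eqP (pairing_fst epi j)) (eqP (pairing_snd epi j)).
under eq_bigr do rewrite pair_sum -mulnb natrM.
by rewrite big_split /= !hP.
Qed.
End Contraction.

Section Unitarity.
Variables (R : numClosedFieldType) (d : nat).

Lemma sum_pidx (F : 'I_(d * d) -> R) : \sum_k F k = \sum_i \sum_j F (pidx i j).
Proof.
by rewrite (reindex _ (@curry_mxvec_bij d d)) /= pair_bigA; apply: eq_bigr => -[].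
Qed.

Lemma pidx_eq (i j k l : 'I_d) : (pidx i j == pidx k l) = (i == k) && (j == l).
Proof.
by rewrite /pidx /mxvec_index (inj_eq (cast_ord_inj (eq_n := _))) (inj_eq enum_rank_inj).
Qed.

(* [in], [out], [left] and [right] name the two legs of [U] that are summed over. *)
Lemma orthonormal_in (U : 'M[R]_(d * d)) :
  U *m adjoint U = 1%:M -> orthonormal_family (fun a b y z => ent U y z a b).
Proof.
move=> hU y1 z1 y2 z2.
have := congr1 (fun M : 'M[R]_(d * d) => M (pidx y1 z1) (pidx y2 z2)) hU.
rewrite /= !mxE pidx_eq sum_pidx => <-.
by apply: eq_bigr => a _; apply: eq_bigr => b _; rewrite !mxE.
Qed.

Lemma orthonormal_out (U : 'M[R]_(d * d)) :
  adjoint U *m U = 1%:M -> orthonormal_family (fun a b y z => ent U a b y z).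
Proof.
move=> hU y1 z1 y2 z2.
have := congr1 (fun M : 'M[R]_(d * d) => M (pidx y2 z2) (pidx y1 z1)) hU.
rewrite /= !mxE pidx_eq [y2 == _]eq_sym [z2 == _]eq_sym sum_pidx => <-.
by apply: eq_bigr => a _; apply: eq_bigr => b _; rewrite !mxE mulrC.
Qed.

Lemma orthonormal_left (U : 'M[R]_(d * d)) :
  dual_unitary U -> orthonormal_family (fun a b y z => ent U b z a y).
Proof.
case=> _ [Ut [hUt [_ hUt']]] y1 z1 y2 z2; rewrite -(orthonormal_out hUt').
by apply: eq_bigr => a _; apply: eq_bigr => b _; rewrite !hUt.
Qed.

Lemma orthonormal_right (U : 'M[R]_(d * d)) :
  dual_unitary U -> orthonormal_family (fun a b y z => ent U z b y a).
Proof.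
case=> _ [Ut [hUt [hUt' _]]] y1 z1 y2 z2; rewrite -(orthonormal_in hUt').
by apply: eq_bigr => a _; apply: eq_bigr => b _; rewrite !hUt.
Qed.
End Unitarity.

Section PairList.
Variables (n m : nat) (ps : m.+2.-tuple ('I_n.+1 * 'I_n.+1)).

Definition pairs_fst (j : 'I_m.+2) : 'I_n.+1 := (tnth ps j).1.
Definition pairs_snd (j : 'I_m.+2) : 'I_n.+1 := (tnth ps j).2.
(* Built with [%:R], the index reduces to the very numerals used in [circ], [tri] and
   [cross], so that the concrete identities below hold by computation. *)
Definition pairs_index (s : 'I_n.+1) : 'I_m.+2 :=
  (find (fun p => (p.1 == s) || (p.2 == s)) ps)%:R.
End PairList.

Definition circ_pairs : 4.-tuple ('I_8 * 'I_8) := [tuple (0, 1); (2, 3); (4, 5); (6, 7)].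
Definition tri_pairs : 4.-tuple ('I_8 * 'I_8) := [tuple (0, 3); (1, 2); (4, 7); (5, 6)].
Definition cross_pairs : 4.-tuple ('I_8 * 'I_8) := [tuple (0, 7); (1, 6); (2, 5); (3, 4)].
Definition halves : 2.-tuple ('I_4 * 'I_4) := [tuple (0, 1); (2, 3)].

Lemma circ_pairing :
  pairing (pairs_fst circ_pairs) (pairs_snd circ_pairs) (pairs_index circ_pairs).
Proof. by split; case=> [[|[|[|[|[|[|[|[|]]]]]]]] ?]. Qed.
Lemma tri_pairing :
  pairing (pairs_fst tri_pairs) (pairs_snd tri_pairs) (pairs_index tri_pairs).
Proof. by split; case=> [[|[|[|[|[|[|[|[|]]]]]]]] ?]. Qed.
Lemma cross_pairing :
  pairing (pairs_fst cross_pairs) (pairs_snd cross_pairs) (pairs_index cross_pairs).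
Proof. by split; case=> [[|[|[|[|[|[|[|[|]]]]]]]] ?]. Qed.
Lemma halves_pairing : pairing (pairs_fst halves) (pairs_snd halves) (pairs_index halves).
Proof. by split; case=> [[|[|[|[|]]]] ?]. Qed.

Lemma circ_parity j : odd (pairs_fst circ_pairs j) != odd (pairs_snd circ_pairs j).
Proof. by case: j => [[|[|[|[|]]]] ?]. Qed.
Lemma tri_parity j : odd (pairs_fst tri_pairs j) != odd (pairs_snd tri_pairs j).
Proof. by case: j => [[|[|[|[|]]]] ?]. Qed.
Lemma cross_parity j : odd (pairs_fst cross_pairs j) != odd (pairs_snd cross_pairs j).
Proof. by case: j => [[|[|[|[|]]]] ?]. Qed.

Section Patterns.
Context {C : numClosedFieldType} {d : nat}.

Lemma circ_paired : @circ C d =1 paired C (pairs_fst circ_pairs) (pairs_snd circ_pairs).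
Proof. by move=> k; rewrite /paired !big_ord_recl big_ord0 mulr1 -!natrM !mulnb. Qed.
Lemma tri_paired : @tri C d =1 paired C (pairs_fst tri_pairs) (pairs_snd tri_pairs).
Proof. by move=> k; rewrite /paired !big_ord_recl big_ord0 mulr1 -!natrM !mulnb. Qed.
Lemma cross_paired : @cross C d =1 paired C (pairs_fst cross_pairs) (pairs_snd cross_pairs).
Proof. by move=> k; rewrite /paired !big_ord_recl big_ord0 mulr1 -!natrM !mulnb. Qed.

Lemma gate_contract (P : lab d -> C) (e o : 'I_4 -> 'I_8) (pi : 'I_8 -> 'I_4)
    (H : 'I_d -> 'I_d -> 'I_d -> 'I_d -> C) :
  pairing e o pi -> (forall j, odd (e j) != odd (o j)) -> P =1 paired C e o ->
  orthonormal_family H -> forall y z : lab d,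
  \sum_u \sum_v P u * P v * \prod_(s < 8)
    (if ~~ odd s then H (u s) (v s) (y s) (z s) else (H (u s) (v s) (y s) (z s))^*)
  = P y * P z.
Proof.
move=> epi parity hP hH y z.
apply: (paired_contract (plain := fun s : 'I_8 => ~~ odd s) epi _ _ _ hP hH) => j.
by rewrite (inj_eq negb_inj).
Qed.

Lemma sum_halves :
  \sum_(t : {ffun 'I_4 -> 'I_d}) ((t 0 == t 1) && (t 2 == t 3))%:R = (d ^ 2)%:R :> C.
Proof.
transitivity
  (\sum_(t : {ffun 'I_4 -> 'I_d}) paired C (pairs_fst halves) (pairs_snd halves) t).
  by apply: eq_bigr => t _; rewrite /paired !big_ord_recl big_ord0 mulr1 -natrM mulnb.
by rewrite (sum_paired _ _ halves_pairing) !card_ord.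
Qed.

Lemma sum_tri_circ : \sum_k @tri C d k * circ C k = (d ^ 2)%:R.
Proof.
under eq_bigr do rewrite tri_paired.
rewrite (paired_sum tri_pairing) -sum_halves; apply: eq_bigr => t _.
have -> : circ C [ffun s => t (pairs_index tri_pairs s)]
    = [&& t 0 == t 1, t 1 == t 0, t 2 == t 3 & t 3 == t 2]%:R by rewrite /circ !ffunE.
by rewrite [t 1 == _]eq_sym [t 3 == _]eq_sym; case: (t 0 == t 1); case: (t 2 == t 3).
Qed.

Lemma sum_circ_cross : \sum_k @circ C d k * cross C k = (d ^ 2)%:R.
Proof.
under eq_bigr do rewrite mulrC cross_paired.
rewrite (paired_sum cross_pairing) -sum_halves; apply: eq_bigr => t _.
have -> : circ C [ffun s => t (pairs_index cross_pairs s)]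
    = [&& t 0 == t 1, t 2 == t 3, t 3 == t 2 & t 1 == t 0]%:R by rewrite /circ !ffunE.
by rewrite [t 1 == _]eq_sym [t 3 == _]eq_sym; case: (t 0 == t 1); case: (t 2 == t 3).
Qed.
End Patterns.

(* By definition [Rmat U e a] and [Lmat U b c] are path sums, between tri and circ and
   between circ and cross, of the gate kernels passed as [G] below. *)
Section Eigenvectors.
Variables (C : numClosedFieldType) (d x : nat) (U : 'I_x -> 'M[C]_(d * d)).
Hypothesis hU : forall m, unitary_mx (U m).

Lemma Rmat_right_eigen (y : nat) : (forall m : 'I_x, (m < y)%N -> dual_unitary (U m)) ->
  mact (Rmat U) (@rvec C d x y) = (fun e => (d ^ 2)%:R * @rvec C d x y e).
Proof.
move=> hdual; apply: functional_extensionality => e; rewrite /mact.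
rewrite (path_sum_prefix_eigen (G := fun m h p q => gate (U m) h q p (e m)) (w := e))
  => [|m ym q|m ym p].
- by rewrite sum_tri_circ mulrC.
- exact: (gate_contract tri_pairing tri_parity tri_paired
    (orthonormal_family_transpose (orthonormal_left (hdual m ym))) (e m) q).
- exact: (gate_contract circ_pairing circ_parity circ_paired
    (orthonormal_family_transpose (orthonormal_in (hU m).1)) (e m) p).
Qed.

Lemma Rmat_left_eigen (y : nat) : (forall m : 'I_x, (y <= m)%N -> dual_unitary (U m)) ->
  ract (@rvec C d x y) (Rmat U) = (fun a => (d ^ 2)%:R * @rvec C d x y a).
Proof.
move=> hdual; apply: functional_extensionality => a; rewrite /ract.
under eq_bigr do rewrite mulrC.
rewrite (path_sum_prefix_eigen (G := fun m h p q => gate (U m) (a m) q p h) (w := a))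
  => [|m ym q|m ym p].
- by rewrite sum_tri_circ mulrC.
- exact: (gate_contract tri_pairing tri_parity tri_paired
    (orthonormal_out (hU m).2) (a m) q).
- exact: (gate_contract circ_pairing circ_parity circ_paired
    (orthonormal_right (hdual m ym)) (a m) p).
Qed.

Lemma Lmat_right_eigen (y : nat) : (forall m : 'I_x, (m < y)%N -> dual_unitary (U m)) ->
  mact (Lmat U) (@lvec C d x y) = (fun b => (d ^ 2)%:R * @lvec C d x y b).
Proof.
move=> hdual; apply: functional_extensionality => b; rewrite /mact.
rewrite (path_sum_prefix_eigen (G := fun m h p q => gate (U m) p (b m) h q) (w := b))
  => [|m ym q|m ym p].
- by rewrite sum_circ_cross mulrC.
- exact: (gate_contract circ_pairing circ_parity circ_paired
    (orthonormal_left (hdual m ym)) (b m) q).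
- exact: (gate_contract cross_pairing cross_parity cross_paired
    (orthonormal_family_transpose (orthonormal_out (hU m).2)) (b m) p).
Qed.

Lemma Lmat_left_eigen (y : nat) : (forall m : 'I_x, (y <= m)%N -> dual_unitary (U m)) ->
  ract (@lvec C d x y) (Lmat U) = (fun c => (d ^ 2)%:R * @lvec C d x y c).
Proof.
move=> hdual; apply: functional_extensionality => c; rewrite /ract.
under eq_bigr do rewrite mulrC.
rewrite (path_sum_prefix_eigen (G := fun m h p q => gate (U m) p h (c m) q) (w := c))
  => [|m ym q|m ym p].
- by rewrite sum_circ_cross mulrC.
- exact: (gate_contract circ_pairing circ_parity circ_paired
    (orthonormal_in (hU m).1) (c m) q).
- exact: (gate_contract cross_pairing cross_parity cross_paired
    (orthonormal_family_transpose (orthonormal_right (hdual m ym))) (c m) p).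
Qed.
End Eigenvectors.

Definition indicator_label d (hd : (1 < d)%N) (S : pred nat) : lab d :=
  [ffun s : 'I_8 => if S s then Ordinal hd else Ordinal (ltnW hd)].

Theorem lemma2 (C : numClosedFieldType) (d x : nat) (hd : (2 <= d)%N) (hx : (1 <= x)%N)
  (U : 'I_x -> 'M[C]_(d * d)) (hU : forall m, unitary_mx (U m)) :
  let R := Rmat U in
  let L := Lmat U in
  let dd : C := (d ^ 2)%:R in
  ((forall m, dual_unitary (U m)) ->
     (forall y : 'I_x.+1,
        mact R (@rvec C d x y) = (fun a => dd * @rvec C d x y a) /\
        ract (@rvec C d x y) R = (fun a => dd * @rvec C d x y a) /\
        mact L (@lvec C d x y) = (fun a => dd * @lvec C d x y a) /\
        ract (@lvec C d x y) L = (fun a => dd * @lvec C d x y a)) /\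
     (forall c : 'I_x.+1 -> C,
        (forall a, \sum_(y < x.+1) c y * @rvec C d x y a = 0) -> forall y, c y = 0) /\
     (forall c : 'I_x.+1 -> C,
        (forall a, \sum_(y < x.+1) c y * @lvec C d x y a = 0) -> forall y, c y = 0)) /\
  (mact R (@rvec C d x 0) = (fun a => dd * @rvec C d x 0 a) /\
   mact L (@lvec C d x 0) = (fun a => dd * @lvec C d x 0 a) /\
   ract (@rvec C d x x) R = (fun a => dd * @rvec C d x x a) /\
   ract (@lvec C d x x) L = (fun a => dd * @lvec C d x x a)).
Proof.
move=> R L dd; rewrite {}/R {}/L {}/dd.
have vacuous_below_0 (m : 'I_x) : (m < 0)%N -> dual_unitary (U m) by [].
have vacuous_from_x (m : 'I_x) : (x <= m)%N -> dual_unitary (U m) by rewrite leqNgt ltn_ord.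
split; last first.
  by rewrite Rmat_right_eigen // Lmat_right_eigen // Rmat_left_eigen // Lmat_left_eigen.
move=> hdual; split.
  by move=> y; rewrite Rmat_right_eigen ?Rmat_left_eigen ?Lmat_right_eigen ?Lmat_left_eigen
    // => m _; apply: hdual.
pose label := indicator_label hd.
split.
- apply: (prefix_prods_free (t := label (pred2 1 2)) (c := label (pred2 2 3)));
    by rewrite /tri /circ !ffunE.
- apply: (prefix_prods_free (t := label (pred2 2 3)) (c := label (pred2 1 6)));
    by rewrite /circ /cross !ffunE.
Qed.
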